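(* Let $\sigma:\mathbb{R}\to\mathbb{R}$ be an increasing odd homeomorphism. The union of all $\sigma$-rational lines is dense in $\mathbb{R}^2$.
   Context: $h_\sigma(x,y)=(x+\sigma^{-1}(y),y)$, $v_\sigma(x,y)=(x,\sigma(x)+y)$. The $\sigma$-rational lines are: the axes $Ox=\mathbb{R}\times\{0\}$ and $Oy=\{0\}\times\mathbb{R}$; the sets $m(Ox)$ with $m$ in the monoid (containing the identity) generated by $h_\sigma,v_\sigma$; and the sets $m(Oy)$ with $m$ in the monoid generated by $h_\sigma^{-1},v_\sigma^{-1}$. *)

From HB Require Import structures.
From mathcomp Require Import all_boot all_order all_algebra.
From mathcomp Require Import all_classical all_reals all_analysis.
Set Implicit Arguments. Unset Strict Implicit. Unset Printing Implicit Defensive.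
Import Order.TTheory GRing.Theory Num.Theory.
Local Open Scope classical_set_scope.
Local Open Scope ring_scope.

Section SigmaLines.
Variable R : realType.

Definition h_sigma (sinv : R -> R) (p : R * R) : R * R := (p.1 + sinv p.2, p.2).
Definition v_sigma (sigma : R -> R) (p : R * R) : R * R := (p.1, sigma p.1 + p.2).
Definition h_sigma_inv (sinv : R -> R) (p : R * R) : R * R := (p.1 - sinv p.2, p.2).
Definition v_sigma_inv (sigma : R -> R) (p : R * R) : R * R := (p.1, p.2 - sigma p.1).

(* the composite of a word in two generators f (true) and g (false);
   the empty word gives the identity: these are exactly the elements of the
   monoid generated by f and g *)
Definition word_map (f g : R * R -> R * R) (w : seq bool) : R * R -> R * R :=
  foldr (fun b acc => (if b then f else g) \o acc) id w.

Definition Ox : set (R * R) := [set p | p.2 = 0].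
Definition Oy : set (R * R) := [set p | p.1 = 0].

Definition sigma_rational_line (sigma sinv : R -> R) (L : set (R * R)) : Prop :=
  L = Ox \/ L = Oy
  \/ (exists w, L = word_map (h_sigma sinv) (v_sigma sigma) w @` Ox)
  \/ (exists w, L = word_map (h_sigma_inv sinv) (v_sigma_inv sigma) w @` Oy).

Definition sigma_rational_union (sigma sinv : R -> R) : set (R * R) :=
  \bigcup_(L in sigma_rational_line sigma sinv) L.

End SigmaLines.

From HB Require Import structures.
From mathcomp Require Import all_boot all_order all_algebra.
From mathcomp Require Import all_classical all_reals all_analysis.
From mathcomp Require Import lra.
Import Order.TTheory GRing.Theory Num.Theory.
Import numFieldNormedType.Exports.
Local Open Scope classical_set_scope.
Local Open Scope ring_scope.

(* The graph of sigma is V(Ox) = H(Oy), so every point of its orbit under the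
   monoid generated by H and V lies on a sigma-rational line, and so does its
   mirror image (x, y) |-> (-x, y), which conjugates H, V to H^-1, V^-1; since
   p |-> -p commutes with H and V, it suffices to approximate points of the open
   first quadrant by this orbit.  Pull a short horizontal segment back by H^-1
   while its left end lies below the graph and by V^-1 while its right end lies
   above it: the image stays in the open quadrant with horizontal extent at
   least d, and an archimedean count bounds the number of steps.  When neither
   move applies, the image crosses the graph by the intermediate value theorem. *)

Lemma exists_nat_mulr_gt (R : archiNumFieldType) (x y : R) :
  0 <= x -> 0 < y -> exists n : nat, x < n%:R * y.
Proof.
move=> x_ge0 y_gt0; exists (Num.Def.archi_bound (x / y)).
by rewrite -ltr_pdivrMr // archi_boundP // divr_ge0 // ltW.
Qed.

Lemma continuous_crossing {R : realType} {f g : R -> R} {a b : R} :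
  a <= b -> continuous f -> continuous g -> f a <= g a -> g b <= f b ->
  exists2 t, t \in `[a, b] & g t = f t.
Proof.
move=> ab cf cg fga gfb.
have [t tab /eqP] : exists2 t, t \in `[a, b] & g t - f t = 0.
  apply: IVT => //.
    by apply: continuous_subspaceT => t; exact: continuousB (cg t) (cf t).
  by rewrite ge_min le_max !subr_ge0 !subr_le0 gfb fga orbT.
by rewrite subr_eq0 => /eqP; exists t.
Qed.

Lemma open_square_nbhs {R : realType} {O : set (R * R)} {a b : R} :
  open O -> O (a, b) ->
  exists2 e : R, 0 < e & forall x y, `|x - a| < e -> `|y - b| < e -> O (x, y).
Proof.
move=> oO Oab; have /nbhs_ballP[e e_gt0 ballO] : nbhs (a, b) O.
  exact: open_nbhs_nbhs.
by exists e => // x y xa yb; apply: ballO; split; rewrite /ball /= distrC.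
Qed.

Lemma word_map_rcons {R : realType} (f g : R * R -> R * R) w b p :
  word_map f g (rcons w b) p = word_map f g w ((if b then f else g) p).
Proof. by elim: w => //= c w ->. Qed.

Lemma word_map_conj {R : realType} {f g f' g' phi : R * R -> R * R} :
  (forall p, f' (phi p) = phi (f p)) -> (forall p, g' (phi p) = phi (g p)) ->
  forall w p, word_map f' g' w (phi p) = phi (word_map f g w p).
Proof. by move=> ff' gg'; elim=> //= -[] w IHw p /=; rewrite IHw. Qed.

Definition graph_orbit {R : realType} (sigma sinv : R -> R) : set (R * R) :=
  [set p | exists w x,
    p = word_map (h_sigma sinv) (v_sigma sigma) w (x, sigma x)].

Section GraphOrbit.
Context {R : realType} {sigma sinv : R -> R}.
Hypotheses (sigmaK : cancel sigma sinv) (sinvK : cancel sinv sigma).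

Local Notation H := (h_sigma sinv).
Local Notation V := (v_sigma sigma).
Local Notation Hi := (h_sigma_inv sinv).
Local Notation Vi := (v_sigma_inv sigma).
Local Notation graph_orbit := (graph_orbit sigma sinv).

Lemma graph_orbit_graph x : graph_orbit (x, sigma x).
Proof. by exists [::], x. Qed.

Lemma graph_orbitH p : graph_orbit p -> graph_orbit (H p).
Proof. by move=> [w [x ->]]; exists (true :: w), x. Qed.

Lemma graph_orbitV p : graph_orbit p -> graph_orbit (V p).
Proof. by move=> [w [x ->]]; exists (false :: w), x. Qed.

Lemma graph_orbit_sub_union : graph_orbit `<=` sigma_rational_union sigma sinv.
Proof.
move=> _ [w [x ->]]; exists (word_map H V (rcons w false) @` @Ox R).
  by right; right; left; exists (rcons w false).
by exists (x, 0); rewrite // word_map_rcons /v_sigma /= addr0.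
Qed.

Section Descent.
Hypotheses (sigma_cont : continuous sigma) (sinv_cont : continuous sinv).
Hypothesis sigma_incr : {homo sigma : x y / x < y}.
Hypothesis sigma0 : sigma 0 = 0.

Lemma le_sigma : {mono sigma : x y / x <= y}.
Proof. exact: le_mono. Qed.

Lemma le_sinv : {mono sinv : x y / x <= y}.
Proof. exact: can_mono sinvK le_sigma. Qed.

Lemma lt_sinv : {mono sinv : x y / x < y}.
Proof. exact: leW_mono le_sinv. Qed.

Lemma sinv0 : sinv 0 = 0.
Proof. by rewrite -{1}sigma0 sigmaK. Qed.

Definition admissible_curve (d : R) (g1 g2 : R -> R) :=
  [/\ continuous g1 /\ continuous g2, 0 < g1 0, g1 0 + d <= g1 1,
      0 < g2 1 & g2 1 <= g2 0].

Lemma admissible_curveH {d : R} {g1 g2 : R -> R} :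
  admissible_curve d g1 g2 -> g2 0 < sigma (g1 0) ->
  admissible_curve d (fun t => g1 t - sinv (g2 t)) g2.
Proof.
case=> -[c1 c2] g10_gt0 gap g21_gt0 g2_le below; split => //.
- by split=> // t; exact: continuousB (c1 t) (continuous_comp (c2 t) (sinv_cont _)).
- by rewrite subr_gt0 -{1}(sigmaK (g1 0)) lt_sinv.
- by rewrite addrAC lerB // le_sinv.
Qed.

Lemma admissible_curveV {d : R} {g1 g2 : R -> R} : 0 <= d ->
  admissible_curve d g1 g2 -> sigma (g1 1) < g2 1 ->
  admissible_curve d g1 (fun t => g2 t - sigma (g1 t)).
Proof.
move=> d_ge0 [[c1 c2] g10_gt0 gap g21_gt0 g2_le] above; split => //.
- by split=> // t; exact: continuousB (c2 t) (continuous_comp (c1 t) (sigma_cont _)).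
- by rewrite subr_gt0.
- by rewrite lerB // le_sigma (le_trans _ gap) // lerDl.
Qed.

Lemma admissible_curve_meets_graph_orbit {d : R} {n m : nat} {g1 g2 : R -> R} :
  0 < d ->
  admissible_curve d g1 g2 ->
  g2 1 < n%:R * sigma d -> g1 1 < m%:R * sinv (g2 1) ->
  exists2 t, t \in `[0, 1] & graph_orbit (g1 t, g2 t).
Proof.
(* Each V^-1 step lowers g2 1 by more than sigma d; each H^-1 step lowers
   g1 1 by sinv (g2 1) and leaves g2 unchanged. *)
move=> d_gt0; elim: n m g1 g2 => [|n IHn] m g1 g2 adm.
  by case: adm => _ _ _ g21_gt0 _; rewrite mul0r => /(lt_trans g21_gt0); rewrite ltxx.
elim: m g1 g2 adm => [|m IHm] g1 g2 adm g2_lt g1_lt;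
  have [[c1 c2] g10_gt0 gap g21_gt0 g2_le] := adm.
  by move: g1_lt; rewrite mul0r; lra.
have [below|above0] := ltP (g2 0) (sigma (g1 0)).
  have g1_lt' : g1 1 - sinv (g2 1) < m%:R * sinv (g2 1).
    by move: g1_lt; rewrite ltrBlDr mulrSr mulrDl mul1r.
  have [t t01 orb] := IHm _ _ (admissible_curveH adm below) g2_lt g1_lt'.
  by exists t => //; move/graph_orbitH: orb; rewrite /h_sigma /= subrK.
have [above1|below1] := ltP (sigma (g1 1)) (g2 1).
  have [m' g1_lt'] : exists m' : nat, g1 1 < m'%:R * sinv (g2 1 - sigma (g1 1)).
    apply: exists_nat_mulr_gt; first lra.
    by rewrite -sinv0 lt_sinv subr_gt0.
  have g2_lt' : g2 1 - sigma (g1 1) < n%:R * sigma d.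
    have : sigma d < sigma (g1 1) by apply: sigma_incr; lra.
    by move: g2_lt; rewrite mulrSr mulrDl mul1r; lra.
  have [t t01 orb] :=
    IHn m' g1 _ (admissible_curveV (ltW d_gt0) adm above1) g2_lt' g1_lt'.
  by exists t => //; move/graph_orbitV: orb; rewrite /v_sigma /= subrKC.
have [t t01 cross] := continuous_crossing ler01
  (fun t => continuous_comp (c1 t) (sigma_cont _)) c2 above0 below1.
by exists t => //; rewrite cross; apply: graph_orbit_graph.
Qed.

Lemma graph_orbit_approx {a b e : R} : 0 < a -> 0 < b -> 0 < e ->
  exists2 x, `|x - a| < e & graph_orbit (x, b).
Proof.
move=> a_gt0 b_gt0 e_gt0; set d := e / 2.
have d_gt0 : 0 < d by rewrite divr_gt0.
have adm : admissible_curve d (fun t => a + t * d) (fun=> b).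
  split=> //=; rewrite ?mul0r ?mul1r ?addr0 //.
  split=> [t|]; last exact: cst_continuous.
  by apply: cvgD; [exact: cvg_cst | apply: cvgM; [exact: cvg_id | exact: cvg_cst]].
have [n b_lt] : exists n : nat, b < n%:R * sigma d.
  by apply: exists_nat_mulr_gt; [exact: ltW | rewrite -sigma0 sigma_incr].
have [m ad_lt] : exists m : nat, a + 1 * d < m%:R * sinv b.
  by apply: exists_nat_mulr_gt; [lra | rewrite -sinv0 lt_sinv].
have [t] := admissible_curve_meets_graph_orbit d_gt0 adm b_lt ad_lt.
rewrite in_itv /= => /andP[t_ge0 t_le1] orb; exists (a + t * d) => //.
rewrite addrAC subrr add0r ger0_norm; last by rewrite mulr_ge0 // ltW.
by apply: (le_lt_trans (ler_piMl _ t_le1)); rewrite /d; lra.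
Qed.

End Descent.

Section Symmetry.
Hypothesis sigma_odd : forall x, sigma (- x) = - sigma x.

Lemma sinv_odd y : sinv (- y) = - sinv y.
Proof. by rewrite -{1}(sinvK y) -sigma_odd sigmaK. Qed.

Lemma graph_orbit_opp p : graph_orbit p -> graph_orbit (- p.1, - p.2).
Proof.
move=> [w [x ->]]; exists w, (- x); rewrite sigma_odd.
pose opp q : R * R := (- q.1, - q.2).
have HO q : H (opp q) = opp (H q) by rewrite /opp /h_sigma /= sinv_odd opprD.
have VO q : V (opp q) = opp (V q) by rewrite /opp /v_sigma /= sigma_odd opprD.
by rewrite (word_map_conj HO VO w (x, sigma x)).
Qed.

Lemma graph_orbit_mirror_union p :
  graph_orbit p -> sigma_rational_union sigma sinv (- p.1, p.2).
Proof.
move=> [w [x ->]]; pose mirror q : R * R := (- q.1, q.2).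
have HiM q : Hi (mirror q) = mirror (H q) by rewrite /mirror /h_sigma_inv /= opprD.
have ViM q : Vi (mirror q) = mirror (V q).
  by rewrite /mirror /v_sigma_inv /= sigma_odd opprK addrC.
exists (word_map Hi Vi (rcons w true) @` @Oy R).
  by right; right; right; exists (rcons w true).
exists (0, sigma x) => //; rewrite word_map_rcons.
have -> : Hi (0, sigma x) = mirror (x, sigma x).
  by rewrite /mirror /h_sigma_inv /= sigmaK sub0r.
by rewrite (word_map_conj HiM ViM).
Qed.

Lemma graph_orbit_sign_union p (k l : bool) : graph_orbit p ->
  sigma_rational_union sigma sinv ((-1) ^+ k * p.1, (-1) ^+ l * p.2).
Proof.
case: p => x y orb_xy; case: k l => -[]; rewrite ?expr0 ?expr1 ?mul1r ?mulN1r.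
- exact/graph_orbit_sub_union/graph_orbit_opp.
- exact: graph_orbit_mirror_union.
- by rewrite -[x]opprK; apply: graph_orbit_mirror_union (graph_orbit_opp _ orb_xy).
- exact: graph_orbit_sub_union.
Qed.

End Symmetry.

End GraphOrbit.

Theorem proposition3 (R : realType) (sigma sinv : R -> R)
  (sigmaK : cancel sigma sinv) (sinvK : cancel sinv sigma)
  (sigma_cont : continuous sigma) (sinv_cont : continuous sinv)
  (sigma_incr : forall x y : R, x < y -> sigma x < sigma y)
  (sigma_odd : forall x : R, sigma (- x) = - sigma x) :
  dense (sigma_rational_union sigma sinv).
Proof.
have sigma0 : sigma 0 = 0 by move: (sigma_odd 0); rewrite oppr0; lra.
move=> O [[a b] Oab] oO; have [e e_gt0 Oe] := open_square_nbhs oO Oab.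
have [a0|] := eqVneq a 0.
  by exists (a, b); split => //; exists (@Oy R); [right; left|].
rewrite -normr_gt0 => a_gt0; have [b0|] := eqVneq b 0.
  by exists (a, b); split => //; exists (@Ox R); [left|].
rewrite -normr_gt0 => b_gt0.
have [x xa orb_x] := graph_orbit_approx sigmaK sinvK sigma_cont sinv_cont
  sigma_incr sigma0 a_gt0 b_gt0 e_gt0.
exists ((-1) ^+ (a < 0)%R * x, b); split.
  apply: Oe; last by rewrite subrr normr0.
  by rewrite -[X in _ - X]mulr_sign_norm -mulrBr normrMsign.
rewrite -[X in (_, X)]mulr_sign_norm.
exact: graph_orbit_sign_union sigmaK sinvK sigma_odd _ (a < 0)%R (b < 0)%R orb_x.
Qed.
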